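(* Let $\mathcal{A}\subseteq\mathcal{B}$ be sub-$\sigma$-algebras of a complete probability space $(\Omega,\mathcal{F},P)$, where $\mathcal{B}$ is generated by a countable family of events (together with the $P$-null events). Let $L$ be a linear subspace of $L_\infty(\mathcal{B})$. Let $M:L^+_\infty(\mathcal{B})\to L^+_\infty(\mathcal{A})$ be a regular sublinear operator and $m:L^+_\infty(\mathcal{B})\to L^+_\infty(\mathcal{A})$ a superlinear operator. Let $x:L\to L_\infty(\mathcal{A})$ be a linear operator satisfying \[m(Z)+x(X)\le M(Y)\qquad \text{for all }X\in L,\ Y,Z\in L^+_\infty(\mathcal{B}) \text{ with } Z+X\le Y.\] Then $x$ admits a monotone linear extension $x:L_\infty(\mathcal{B})\to L_\infty(\mathcal{A})$ which is continuous from above and satisfies \[m(Z)+x(X)\le M(Y)\qquad \text{for all }X\in L_\infty(\mathcal{B}),\ Y,Z\in L^+_\infty(\mathcal{B}) \text{ with } Z+X\le Y,\] equivalently $m(X)\le x(X)\le M(X)$ for all $X\in L^+_\infty(\mathcal{B})$.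
   Context: All (in)equalities between random variables hold $P$-a.s. Sublinear: $M(X+Y)\le M(X)+M(Y)$, $M(\lambda X)=\lambda M(X)$ for real $\lambda\ge0$. Superlinear: $m(X+Y)\ge m(X)+m(Y)$, $m(\lambda X)=\lambda m(X)$ for real $\lambda\ge0$. Regular: for every nonincreasing sequence $X_n\downarrow0$ $P$-a.s., $M(X_n)\to0$ $P$-a.s. Monotone: $X\ge X'\Rightarrow x(X)\ge x(X')$. Continuous from above: for every nonincreasing sequence $X_n$ with $P$-a.s. limit $X$, $x(X_n)\downarrow x(X)$ $P$-a.s. *)

From HB Require Import structures.
From mathcomp Require Import all_boot all_order all_algebra.
From mathcomp Require Import all_classical all_reals all_analysis.
Set Implicit Arguments. Unset Strict Implicit. Unset Printing Implicit Defensive.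
Import Order.TTheory GRing.Theory Num.Theory.
Local Open Scope classical_set_scope.
Local Open Scope ring_scope.

Section defs.
Context {d : measure_display} {T : measurableType d} {R : realType}.

Definition pl_sub_sigma_algebra (A : set (set T)) : Prop :=
  sigma_algebra setT A /\ A `<=` measurable.

Definition pl_null_events (P : probability T R) : set (set T) :=
  [set N | measurable N /\ P N = 0%E].

Definition pl_measurable_wrt (A : set (set T)) (f : T -> R) : Prop :=
  forall U : set R, measurable U -> A (f @^-1` U).

(** Membership of (the a.s.-class of) f in L_infty(A): f is a.s. equal to an
    A-measurable function and is essentially bounded. *)
Definition pl_Linf (P : probability T R) (A : set (set T)) (f : T -> R) : Prop :=
  (exists g : T -> R, pl_measurable_wrt A g /\ {ae P, forall w, f w = g w}) /\
  (exists C : R, {ae P, forall w, `|f w| <= C}).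

Definition pl_Linfp (P : probability T R) (A : set (set T)) (f : T -> R) : Prop :=
  pl_Linf P A f /\ {ae P, forall w, 0 <= f w}.

End defs.

(* Hahn-Banach argument with values in L_oo(A). The partial linear extensions
   of x dominated by
     p X := ess inf {M Y - m Z : Y, Z in L^+_oo(B), Z + X <= Y},
   which is sublinear and dominates x on L by hypothesis, are ordered by
   extension; Zorn's lemma yields a maximal one, and a maximal one is defined
   on all of L_oo(B) because a single new direction X0 can always be added:
   L_oo(A) is order complete, so the value at X0 can be chosen as an essential
   infimum. Essential infima are realised as the pointwise infimum of a
   countable subfamily that minimises E[atan (inf)].
   The extension x' satisfies m Z + x' X <= M Y whenever Z + X <= Y; with
   Y = Z = 0 this is monotonicity, and 0 <= x' X_n - x' X <= M (X_n - X)
   turns the regularity of M into continuity from above. *)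

From HB Require Import structures.
From mathcomp Require Import all_boot all_order all_algebra.
From mathcomp Require Import all_classical all_reals all_analysis.
From mathcomp Require Import measurable_realfun.
From mathcomp Require Import lra ring.
Import Order.TTheory GRing.Theory Num.Theory numFieldNormedType.Exports.
Local Open Scope classical_set_scope.
Local Open Scope ring_scope.
Set Implicit Arguments. Unset Strict Implicit.

Section almost_everywhere_combinators.
Context d (T : measurableType d) (R : realType) (mu : {measure set T -> \bar R}).
Implicit Types Q : T -> Prop.

Lemma aeS Q1 Q : (\forall w \ae mu, Q1 w) ->
  (forall w, Q1 w -> Q w) -> (\forall w \ae mu, Q w).
Proof. by move=> h1 H; apply: filterS h1. Qed.

Lemma aeS2 Q1 Q2 Q : (\forall w \ae mu, Q1 w) -> (\forall w \ae mu, Q2 w) ->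
  (forall w, Q1 w -> Q2 w -> Q w) -> (\forall w \ae mu, Q w).
Proof. by move=> h1 h2 H; apply: filterS2 h1 h2. Qed.

Lemma aeS3 Q1 Q2 Q3 Q : (\forall w \ae mu, Q1 w) -> (\forall w \ae mu, Q2 w) ->
  (\forall w \ae mu, Q3 w) ->
  (forall w, Q1 w -> Q2 w -> Q3 w -> Q w) -> (\forall w \ae mu, Q w).
Proof. by move=> h1 h2 h3 H; apply: filterS3 h1 h2 h3. Qed.

Lemma aeS4 Q1 Q2 Q3 Q4 Q : (\forall w \ae mu, Q1 w) -> (\forall w \ae mu, Q2 w) ->
  (\forall w \ae mu, Q3 w) -> (\forall w \ae mu, Q4 w) ->
  (forall w, Q1 w -> Q2 w -> Q3 w -> Q4 w -> Q w) -> (\forall w \ae mu, Q w).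
Proof.
move=> h1 h2 h3 h4 H.
have h34 : \forall w \ae mu, Q3 w /\ Q4 w by apply: (aeS2 h3 h4) => w.
by apply: (aeS3 h1 h2 h34) => w ? ? [? ?]; exact: H.
Qed.

Lemma aeS5 Q1 Q2 Q3 Q4 Q5 Q : (\forall w \ae mu, Q1 w) ->
  (\forall w \ae mu, Q2 w) -> (\forall w \ae mu, Q3 w) -> (\forall w \ae mu, Q4 w) ->
  (\forall w \ae mu, Q5 w) ->
  (forall w, Q1 w -> Q2 w -> Q3 w -> Q4 w -> Q5 w -> Q w) ->
  (\forall w \ae mu, Q w).
Proof.
move=> h1 h2 h3 h4 h5 H.
have h45 : \forall w \ae mu, Q4 w /\ Q5 w by apply: (aeS2 h4 h5) => w.
by apply: (aeS4 h1 h2 h3 h45) => w ? ? ? [? ?]; exact: H.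
Qed.

End almost_everywhere_combinators.

Section linear_combinations.
Context {T : Type} {R : pzRingType}.
Implicit Types (V : (T -> R) -> Prop) (X Y : T -> R).

Definition lincomb_closed V :=
  forall a b X Y, V X -> V Y -> V (fun w => a * X w + b * Y w).

Variable V : (T -> R) -> Prop.
Hypothesis hV : lincomb_closed V.

Lemma lincomb_closedD X Y : V X -> V Y -> V (fun w => X w + Y w).
Proof.
move=> hX hY; have := hV 1 1 hX hY.
by under eq_fun do rewrite !mul1r.
Qed.

Lemma lincomb_closedB X Y : V X -> V Y -> V (fun w => X w - Y w).
Proof.
move=> hX hY; have := hV 1 (-1) hX hY.
by under eq_fun do rewrite mul1r mulN1r.
Qed.

Lemma lincomb_closedZ c X : V X -> V (fun w => c * X w).
Proof.
move=> hX; have := hV c 0 hX hX.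
by under eq_fun do rewrite mul0r addr0.
Qed.

Lemma lincomb_closedN X : V X -> V (fun w => - X w).
Proof.
move=> hX; have := lincomb_closedZ (-1) hX.
by under eq_fun do rewrite mulN1r.
Qed.

End linear_combinations.

Section essentially_bounded.
Context d (T : measurableType d) (R : realType) (P : probability T R).
Variable S : set (set T).
Hypothesis hS : pl_sub_sigma_algebra S.
Implicit Types f g : T -> R.

Lemma measurable_wrtP g :
  pl_measurable_wrt S g <-> measurable_fun (setT : set (g_sigma_algebraType S)) g.
Proof.
have E := measurable_g_measurableTypeE hS.1.
split => [hg _ Y mY|hg Y mY]; first by rewrite setTI E; exact: hg.
by have := hg measurableT Y mY; rewrite setTI E.
Qed.

Lemma measurable_wrt_measurable g : pl_measurable_wrt S g -> measurable_fun setT g.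
Proof. by move=> hg _ Y mY; rewrite setTI; apply: hS.2; exact: hg. Qed.

Lemma Linf_ae_eq f g : pl_Linf P S f -> {ae P, forall w, f w = g w} ->
  pl_Linf P S g.
Proof.
move=> [[f1 [mf1 ff1]] [C fC]] fg; split.
- by exists f1; split => //; apply: (aeS2 fg ff1) => w <-.
- by exists C; apply: (aeS2 fg fC) => w <-.
Qed.

Lemma Linf_lincomb : lincomb_closed (pl_Linf P S).
Proof.
move=> a b f g [[f1 [mf1 ff1]] [C1 fC1]] [[g1 [mg1 gg1]] [C2 gC2]]; split.
- exists (fun w => a * f1 w + b * g1 w); split.
    by apply/measurable_wrtP; apply: measurable_funD; apply: measurable_funM => //;
      exact/measurable_wrtP.
  by apply: (aeS2 ff1 gg1) => w -> ->.
- exists (`|a| * C1 + `|b| * C2); apply: (aeS2 fC1 gC2) => w h1 h2.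
  by rewrite (le_trans (ler_normD _ _))// lerD// normrM ler_wpM2l.
Qed.

Lemma Linf_cst (c : R) : pl_Linf P S (fun=> c).
Proof.
split; last by exists `|c|; apply: aeW.
exists (fun=> c); split; last exact: aeW.
by apply/measurable_wrtP; exact: measurable_cst.
Qed.

Lemma Linf_max f g : pl_Linf P S f -> pl_Linf P S g ->
  pl_Linf P S (fun w => Num.max (f w) (g w)).
Proof.
move=> [[f1 [mf1 ff1]] [C1 fC1]] [[g1 [mg1 gg1]] [C2 gC2]]; split.
- exists (fun w => Num.max (f1 w) (g1 w)); split.
    by apply/measurable_wrtP; apply: measurable_maxr; exact/measurable_wrtP.
  by apply: (aeS2 ff1 gg1) => w -> ->.
- exists (C1 + C2); apply: (aeS2 fC1 gC2) => w h1 h2.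
  have [C10 C20] : 0 <= C1 /\ 0 <= C2 by split; [exact: le_trans h1|exact: le_trans h2].
  rewrite /Num.max; case: ifP => _; first by rewrite (le_trans h2)// lerDr.
  by rewrite (le_trans h1)// lerDl.
Qed.

Lemma Linf_sandwich_bounded f g h : pl_Linf P S f -> pl_Linf P S g ->
  {ae P, forall w, f w <= h w <= g w} -> exists c, {ae P, forall w, `|h w| <= c}.
Proof.
move=> [_ [c1 hc1]] [_ [c2 hc2]] fhg; exists (c1 + c2).
apply: (aeS3 hc1 hc2 fhg) => w; rewrite !ler_norml.
by move=> /andP[? ?] /andP[? ?] /andP[? ?]; apply/andP; split; lra.
Qed.

Lemma Linfp_conic (a b : R) f g : 0 <= a -> 0 <= b ->
  pl_Linfp P S f -> pl_Linfp P S g -> pl_Linfp P S (fun w => a * f w + b * g w).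
Proof.
move=> a0 b0 [hf f0] [hg g0]; split; first exact: Linf_lincomb.
by apply: (aeS2 f0 g0) => w h1 h2; apply: addr_ge0; apply: mulr_ge0.
Qed.

Lemma Linfp_add f g : pl_Linfp P S f -> pl_Linfp P S g ->
  pl_Linfp P S (fun w => f w + g w).
Proof.
by move=> hf hg; have := Linfp_conic ler01 ler01 hf hg; under eq_fun do rewrite !mul1r.
Qed.

Lemma Linfp_scale (c : R) f : 0 <= c -> pl_Linfp P S f ->
  pl_Linfp P S (fun w => c * f w).
Proof.
move=> c0 hf; have := Linfp_conic c0 (lexx 0) hf hf.
by under eq_fun do rewrite mul0r addr0.
Qed.

Lemma Linfp_cst (c : R) : 0 <= c -> pl_Linfp P S (fun=> c).
Proof. by move=> c0; split; [exact: Linf_cst|exact: aeW]. Qed.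

Lemma Linfp_max0 f : pl_Linf P S f -> pl_Linfp P S (fun w => Num.max (f w) 0).
Proof.
move=> hf; split; first exact: Linf_max hf (Linf_cst 0).
by apply: aeW => w; rewrite le_max lexx orbT.
Qed.

End essentially_bounded.

Lemma ae_eq_of_integral_le d (T : measurableType d) (R : realType)
    (mu : {measure set T -> \bar R}) (f g : T -> R) :
  measurable_fun setT f -> measurable_fun setT g ->
  (forall w, 0 <= f w <= g w) -> (\int[mu]_w (g w)%:E < +oo)%E ->
  (\int[mu]_w (g w)%:E <= \int[mu]_w (f w)%:E)%E ->
  {ae mu, forall w, f w = g w}.
Proof.
move=> mf mg fg g_fin gf.
have f0 w : (0 <= (f w)%:E)%E by rewrite lee_fin; case/andP: (fg w).
have gf0 w : (0 <= (g w - f w)%:E)%E by rewrite lee_fin subr_ge0; case/andP: (fg w).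
have mgf : measurable_fun setT (fun w => (g w - f w)%:E).
  by apply/measurable_EFinP; exact: measurable_funB.
have gE : (\int[mu]_w (g w)%:E
    = \int[mu]_w (f w)%:E + \int[mu]_w (g w - f w)%:E)%E.
  rewrite -ge0_integralD //; last exact/measurable_EFinP.
  by apply: eq_integral => w _; rewrite -EFinD addrC subrK.
have f_fin : (\int[mu]_w (f w)%:E)%E \is a fin_num.
  rewrite ge0_fin_numE ?integral_ge0// (le_lt_trans _ g_fin)// gE.
  by rewrite leeDl ?integral_ge0.
have int0 : (\int[mu]_w `|(g w - f w)%:E| = 0)%E.
  under eq_integral do rewrite gee0_abs//.
  apply/eqP; rewrite eq_le integral_ge0// andbT.
  by rewrite -(leeD2lE _ _ f_fin) adde0 -gE.
apply: filterS ((ae_eq_integral_abs mu measurableT mgf).1 int0).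
by move=> w /(_ Logic.I) [/eqP]; rewrite subr_eq0 => /eqP.
Qed.

Section essential_infimum.
Context d (T : measurableType d) (R : realType) (P : probability T R).
Variable A : set (set T).
Hypothesis hA : pl_sub_sigma_algebra A.
Local Notation LA := (pl_Linf P A).
Implicit Types (F : (T -> R) -> Prop) (f g h : T -> R) (C : nat -> T -> R).

Definition is_essinf F h := [/\ LA h,
  forall f, F f -> {ae P, forall w, h w <= f w} &
  forall k, (forall f, F f -> {ae P, forall w, k w <= f w}) ->
    {ae P, forall w, k w <= h w}].

Definition essinf F : T -> R :=
  if pselect (exists h, is_essinf F h) is left e then proj1_sig (cid e)
  else fun=> 0.

Lemma essinfP F : (exists h, is_essinf F h) -> is_essinf F (essinf F).
Proof. by rewrite /essinf; case: pselect => // e _; exact: proj2_sig (cid e). Qed.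

Definition Linf_rep f : T -> R :=
  if pselect (exists g, pl_measurable_wrt A g /\ {ae P, forall w, f w = g w})
    is left e then proj1_sig (cid e) else f.

Lemma Linf_repP f : LA f ->
  pl_measurable_wrt A (Linf_rep f) /\ {ae P, forall w, f w = Linf_rep f w}.
Proof.
by move=> [ex _]; rewrite /Linf_rep; case: pselect => // e; exact: proj2_sig (cid e).
Qed.

Section existence.
Variables (F : (T -> R) -> Prop) (f0 g0 : T -> R).
Hypotheses (Ff0 : F f0) (F_Linf : forall f, F f -> LA f) (g0_Linf : LA g0)
  (g0_lb : forall f, F f -> {ae P, forall w, g0 w <= f w}).

(* A-measurable versions of the members of F, bounded below everywhere by a
   fixed version of g0, so that infima of sequences of them exist pointwise. *)
Let clip f w := Num.max (Linf_rep f w) (Linf_rep g0 w).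
Let seq_inf C w := inf (range (fun n => clip (C n) w)).
Let in_F C := forall n, F (C n).

Lemma clip_ae_eq f : F f -> {ae P, forall w, clip f w = f w}.
Proof.
move=> Ff; have [_ e1] := Linf_repP (F_Linf Ff); have [_ e2] := Linf_repP g0_Linf.
by apply: (aeS3 e1 e2 (g0_lb Ff)) => w + + /max_idPl; rewrite /clip => <- <-.
Qed.

Lemma clip_measurable f : F f -> pl_measurable_wrt A (clip f).
Proof.
move=> Ff; apply/(measurable_wrtP hA); apply: measurable_maxr;
  apply/(measurable_wrtP hA);
  [exact: (Linf_repP (F_Linf Ff)).1|exact: (Linf_repP g0_Linf).1].
Qed.

Lemma seq_inf_hlb C w : has_lbound (range (fun n => clip (C n) w)).
Proof. by exists (Linf_rep g0 w) => _ [n _ <-]; rewrite le_max lexx orbT. Qed.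

Lemma seq_inf_le C w n : seq_inf C w <= clip (C n) w.
Proof. by apply: ge_inf; [exact: seq_inf_hlb|exists n]. Qed.

Lemma seq_inf_glb C w r : (forall n, r <= clip (C n) w) -> r <= seq_inf C w.
Proof.
by move=> hr; apply: lb_le_inf; [exists (clip (C 0%N) w), 0%N|move=> _ [n _ <-]].
Qed.

Lemma seq_inf_ge C w : Linf_rep g0 w <= seq_inf C w.
Proof. by apply: seq_inf_glb => n; rewrite le_max lexx orbT. Qed.

Lemma seq_inf_measurable C : in_F C -> pl_measurable_wrt A (seq_inf C).
Proof.
move=> FC; apply/(measurable_wrtP hA).
have -> : seq_inf C = (fun w => infs ((fun n => clip (C n)) ^~ w) 0%N).
  apply/funext => w; rewrite /seq_inf /infs /= /sdrop; congr inf.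
  by apply/seteqP; split => _ [n _ <-]; exists n.
apply: measurable_fun_infs => [w _|n]; first exact: seq_inf_hlb.
exact/(measurable_wrtP hA)/clip_measurable.
Qed.

(* Sequences from F are compared through E[psi (inf_n C_n)], with psi bounded and
   strictly increasing; a minimising sequence then has an essential infimum
   that no further member of F can lower. *)
Let psi (t : R) := atan t + pi.
Let score C := fine (\int[P]_w (psi (seq_inf C w))%:E).

Lemma psi_ge0 t : 0 <= psi t.
Proof. by have := atan_gtNpi2 t; have := pi_gt0 R; rewrite /psi; lra. Qed.

Lemma psi_le t : psi t <= 2 * pi.
Proof. by have := atan_ltpi2 t; have := pi_gt0 R; rewrite /psi; lra. Qed.

Lemma psi_seq_inf_measurable C : in_F C ->
  measurable_fun setT (fun w => psi (seq_inf C w)).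
Proof.
move=> FC; apply: measurable_funD => //; apply: measurableT_comp.
  by apply: continuous_measurable_fun; exact: continuous_atan.
apply: (measurable_wrt_measurable hA); exact: seq_inf_measurable.
Qed.

Lemma score_integral_lt C : in_F C ->
  (\int[P]_w (psi (seq_inf C w))%:E < +oo)%E.
Proof.
move=> FC; apply: (@le_lt_trans _ _ (\int[P]_(w in setT) (cst (2 * pi)%:E w))%E).
  apply: ge0_le_integral => //.
  - by move=> w _; rewrite lee_fin psi_ge0.
  - by apply/measurable_EFinP; exact: psi_seq_inf_measurable.
  - by move=> w _; rewrite /= lee_fin psi_le.
by rewrite integral_cst //= probability_setT mule1 ltry.
Qed.

Lemma scoreE C : in_F C -> (score C)%:E = (\int[P]_w (psi (seq_inf C w))%:E)%E.
Proof.
move=> FC; rewrite fineK // ge0_fin_numE ?score_integral_lt //.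
by apply: integral_ge0 => w _; rewrite lee_fin psi_ge0.
Qed.

Lemma score_ge0 C : in_F C -> 0 <= score C.
Proof.
move=> FC; rewrite -lee_fin scoreE //.
by apply: integral_ge0 => w _; rewrite lee_fin psi_ge0.
Qed.

Lemma le_score C1 C2 : in_F C1 -> in_F C2 ->
  (forall w, seq_inf C1 w <= seq_inf C2 w) -> score C1 <= score C2.
Proof.
move=> FC1 FC2 le12; rewrite -lee_fin !scoreE //; apply: ge0_le_integral => //.
- by move=> w _; rewrite lee_fin psi_ge0.
- by apply/measurable_EFinP; exact: psi_seq_inf_measurable.
- by apply/measurable_EFinP; exact: psi_seq_inf_measurable.
- by move=> w _; rewrite lee_fin lerD2r le_atan.
Qed.

Let min_score := inf [set score C | C in in_F].

Lemma has_inf_scores : has_inf [set score C | C in in_F].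
Proof.
split; first by exists (score (fun=> f0)), (fun=> f0).
by exists 0 => _ [C FC <-]; exact: score_ge0.
Qed.

Lemma min_score_le C : in_F C -> min_score <= score C.
Proof. by move=> FC; apply: ge_inf; [exact: has_inf_scores.2|exists C]. Qed.

Lemma score_minimizer : exists2 C, in_F C & score C <= min_score.
Proof.
have approx k : exists C, in_F C /\ score C < min_score + k.+1%:R^-1.
  have k_pos : 0 < k.+1%:R^-1 :> R by [].
  by have [_ [C FC <-] ?] := inf_adherent k_pos has_inf_scores; exists C.
have [Ck hCk] := choice approx.
pose Cs n := if (unpickle n : option (nat * nat)) is Some (k, j) then Ck k j else f0.
have FCs : in_F Cs.
  by move=> n; rewrite /Cs; case: unpickle => [[k j]|] //; exact: (hCk k).1.
exists Cs => //; apply/ler_addgt0Pr => e e0.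
have [k] := ltr_add_invr e0; rewrite add0r => ke.
have le_k : score Cs <= score (Ck k).
  apply: le_score => // [|w]; first exact: (hCk k).1.
  apply: seq_inf_glb => j.
  by have := seq_inf_le Cs w (pickle (k, j)); rewrite /Cs pickleK.
by rewrite (le_trans le_k)// ltW// (lt_le_trans (hCk k).2)// lerD2l ltW.
Qed.

Lemma minimizer_seq_inf_le C f : in_F C -> score C <= min_score -> F f ->
  {ae P, forall w, seq_inf C w <= f w}.
Proof.
move=> FC C_min Ff.
pose C' n := if n is n'.+1 then C n' else f.
have FC' : in_F C' by case.
have le_C w : seq_inf C' w <= seq_inf C w.
  by apply: seq_inf_glb => n; exact: (seq_inf_le C' w n.+1).
have psi_eq : {ae P, forall w, psi (seq_inf C' w) = psi (seq_inf C w)}.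
  apply: ae_eq_of_integral_le; try exact: psi_seq_inf_measurable.
  - by move=> w; rewrite psi_ge0 /= lerD2r le_atan.
  - exact: score_integral_lt.
  - by rewrite -!scoreE // lee_fin (le_trans C_min) ?min_score_le.
apply: (aeS2 psi_eq (clip_ae_eq Ff)) => w; rewrite /psi => /addIr /(congr1 tan).
by rewrite !atanK => <- <-; exact: (seq_inf_le C' w 0).
Qed.

Lemma essinf_exists : exists h, is_essinf F h.
Proof.
have [C FC C_min] := score_minimizer.
have [_ g0_rep] := Linf_repP g0_Linf.
exists (seq_inf C); split.
- split; first by exists (seq_inf C); split; [exact: seq_inf_measurable|exact: aeW].
  apply: (Linf_sandwich_bounded g0_Linf (F_Linf (FC 0%N))).
  apply: (aeS2 g0_rep (clip_ae_eq (FC 0%N))) => w e0 <-.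
  by rewrite e0 seq_inf_ge seq_inf_le.
- by move=> f Ff; exact: minimizer_seq_inf_le.
- move=> k k_lb.
  have k_le : {ae P, forall w, forall n, k w <= clip (C n) w}.
    apply: ae_foralln => n.
    by apply: (aeS2 (k_lb _ (FC n)) (clip_ae_eq (FC n))) => w + ->.
  by apply: (aeS k_le) => w; exact: seq_inf_glb.
Qed.

End existence.

Lemma essinf_spec F f0 g0 : F f0 -> (forall f, F f -> LA f) -> LA g0 ->
  (forall f, F f -> {ae P, forall w, g0 w <= f w}) -> is_essinf F (essinf F).
Proof.
move=> Ff0 F_Linf g0_Linf g0_lb; apply: essinfP.
exact: (essinf_exists Ff0 F_Linf g0_Linf g0_lb).
Qed.

End essential_infimum.

Section ae_linear_maps.
Context d (T : measurableType d) (R : realType) (P : probability T R).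
Implicit Types (V : (T -> R) -> Prop) (y : (T -> R) -> T -> R) (X Y : T -> R).

Definition ae_linear_on V y := forall (a b : R) X Y, V X -> V Y ->
  {ae P, forall w, y (fun u => a * X u + b * Y u) w = a * y X w + b * y Y w}.

Variables (V : (T -> R) -> Prop) (y : (T -> R) -> T -> R).
Hypothesis y_lin : ae_linear_on V y.

Lemma ae_linear_onB X Y : V X -> V Y ->
  {ae P, forall w, y (fun u => X u - Y u) w = y X w - y Y w}.
Proof.
move=> hX hY; have -> : (fun u => X u - Y u) = (fun u => 1 * X u + -1 * Y u).
  by apply/funext => u; rewrite mul1r mulN1r.
by apply: filterS (y_lin 1 (-1) hX hY) => w ->; rewrite mul1r mulN1r.
Qed.

Lemma ae_linear_onZ (c : R) X : V X ->
  {ae P, forall w, y (fun u => c * X u) w = c * y X w}.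
Proof.
move=> hX; have -> : (fun u => c * X u) = (fun u => c * X u + 0 * X u).
  by apply/funext => u; rewrite mul0r addr0.
by apply: filterS (y_lin c 0 hX hX) => w ->; rewrite mul0r addr0.
Qed.

Lemma ae_linear_onN X : V X -> {ae P, forall w, y (fun u => - X u) w = - y X w}.
Proof.
move=> hX; have -> : (fun u => - X u) = (fun u => -1 * X u).
  by apply/funext => u; rewrite mulN1r.
by apply: filterS (ae_linear_onZ (-1) hX) => w ->; rewrite mulN1r.
Qed.

End ae_linear_maps.

Lemma funrposBneg_pt (T : Type) (R : realDomainType) (f : T -> R) w :
  f^\+ w - f^\- w = f w.
Proof. by have /(congr1 (@^~ w)) := funrposBneg f. Qed.

Lemma addr_pmul_le (R : realFieldType) (t a b h : R) : 0 < t ->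
  h <= t^-1 * (b - a) -> a + t * h <= b.
Proof. by move=> t0; rewrite ler_pdivlMl //; lra. Qed.

Lemma addr_nmul_le (R : realFieldType) (t a b h : R) : t < 0 ->
  (- t)^-1 * (a - b) <= h -> a + t * h <= b.
Proof. by move=> t0; rewrite ler_pdivrMl ?oppr_gt0 // mulNr; lra. Qed.

Section conditional_extension.
Context d (T : measurableType d) (R : realType) (P : probability T R).
Variables (A B : set (set T)).
Hypotheses (subA : pl_sub_sigma_algebra A) (subB : pl_sub_sigma_algebra B).
Local Notation LA := (pl_Linf P A).
Local Notation LB := (pl_Linf P B).
Local Notation LBp := (pl_Linfp P B).
Local Notation zero := (fun=> 0 : R).
Let LA_lin : lincomb_closed LA := Linf_lincomb subA.
Let LB_lin : lincomb_closed LB := Linf_lincomb subB.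

Variable L : (T -> R) -> Prop.
Hypotheses (L_sub : forall X, L X -> LB X)
  (L_ae : forall X X', L X -> {ae P, forall w, X w = X' w} -> L X')
  (L0 : L zero) (L_lin : lincomb_closed L).
Variables (M m : (T -> R) -> (T -> R)).
Hypotheses (M_range : forall X, LBp X -> pl_Linfp P A (M X))
  (M_subadd : forall X Y, LBp X -> LBp Y ->
     {ae P, forall w, M (fun u => X u + Y u) w <= M X w + M Y w})
  (M_hom : forall (l : R) X, 0 <= l -> LBp X ->
     {ae P, forall w, M (fun u => l * X u) w = l * M X w})
  (M_regular : forall Xn : nat -> T -> R, (forall n, LBp (Xn n)) ->
     {ae P, forall w, forall n, Xn n.+1 w <= Xn n w} ->
     {ae P, forall w, (fun n => Xn n w) @ \oo --> (0:R)} ->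
     {ae P, forall w, (fun n => M (Xn n) w) @ \oo --> (0:R)})
  (m_range : forall X, LBp X -> pl_Linfp P A (m X))
  (m_superadd : forall X Y, LBp X -> LBp Y ->
     {ae P, forall w, m X w + m Y w <= m (fun u => X u + Y u) w})
  (m_hom : forall (l : R) X, 0 <= l -> LBp X ->
     {ae P, forall w, m (fun u => l * X u) w = l * m X w}).
Variable x : (T -> R) -> (T -> R).
Hypotheses (x_wd : forall X X', L X -> L X' ->
     {ae P, forall w, X w = X' w} -> {ae P, forall w, x X w = x X' w})
  (x_range : forall X, L X -> LA (x X))
  (x_lin : ae_linear_on P L x)
  (x_dom : forall X Y Z, L X -> LBp Y -> LBp Z ->
     {ae P, forall w, Z w + X w <= Y w} ->
     {ae P, forall w, m Z w + x X w <= M Y w}).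

Lemma LBp0 : LBp zero.
Proof. exact: (Linfp_cst P subB (lexx 0)). Qed.

Lemma homogeneous0 (N : (T -> R) -> T -> R) :
  (forall (l : R) X, 0 <= l -> LBp X ->
     {ae P, forall w, N (fun u => l * X u) w = l * N X w}) ->
  {ae P, forall w, N zero w = 0}.
Proof.
move=> N_hom; have -> : zero = (fun u : T => 0 * 0) by apply/funext => u; rewrite mul0r.
by apply: filterS (N_hom 0 _ (lexx 0) LBp0) => w ->; rewrite mul0r.
Qed.

Let M0 := homogeneous0 M_hom.
Let m0 := homogeneous0 m_hom.

Lemma x0 : {ae P, forall w, x zero w = 0}.
Proof.
have -> : zero = (fun u : T => 0 * 0 + 0 * 0) by apply/funext => u; rewrite mul0r addr0.
by apply: filterS (x_lin 0 0 L0 L0) => w ->; rewrite !mul0r addr0.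
Qed.

Lemma m_le_M Y Z : LBp Y -> LBp Z -> {ae P, forall w, Z w <= Y w} ->
  {ae P, forall w, m Z w <= M Y w}.
Proof.
move=> hY hZ ZY; have : {ae P, forall w, Z w + zero w <= Y w}.
  by apply: (aeS ZY) => w; rewrite addr0.
move/(x_dom L0 hY hZ) => h.
by apply: (aeS2 h x0) => w + x0w; rewrite x0w addr0.
Qed.

Lemma funrpos_Linfp X : LB X -> LBp X^\+.
Proof. exact: Linfp_max0. Qed.

Lemma funrneg_Linfp X : LB X -> LBp X^\-.
Proof. by move=> hX; exact: (Linfp_max0 subB (lincomb_closedN LB_lin hX)). Qed.

(* [gap_inf X], the essential infimum of the M Y - m Z with Z + X <= Y, plays
   the role of the sublinear functional of the Hahn-Banach argument. *)
Definition gap_family X f := exists Y Z, [/\ LBp Y, LBp Z,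
  {ae P, forall w, Z w + X w <= Y w} & f = (fun w => M Y w - m Z w)].

Definition gap_inf X := essinf P A (gap_family X).

Lemma gap_family_Linf X f : gap_family X f -> LA f.
Proof.
move=> [Y [Z [hY hZ _ ->]]].
exact: (lincomb_closedB LA_lin (M_range hY).1 (m_range hZ).1).
Qed.

Lemma gap_family_lb X f : LB X -> gap_family X f ->
  {ae P, forall w, m X^\+ w - M X^\- w <= f w}.
Proof.
move=> hX [Y [Z [hY hZ ZXY ->]]].
have [hXp hXn] := (funrpos_Linfp hX, funrneg_Linfp hX).
have ZXY' : {ae P, forall w, Z w + X^\+ w <= Y w + X^\- w}.
  by apply: (aeS ZXY) => w; have := funrposBneg_pt X w; lra.
have := m_le_M (Linfp_add subB hY hXn) (Linfp_add subB hZ hXp) ZXY'.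
by move=> le_mM; apply: (aeS3 le_mM (M_subadd hY hXn) (m_superadd hZ hXp)) => w; lra.
Qed.

Lemma gap_infP X : LB X -> is_essinf P A (gap_family X) (gap_inf X).
Proof.
move=> hX; apply: (essinf_spec subA (f0 := fun w => M X^\+ w - m X^\- w)).
- exists X^\+, X^\-; split=> //; [exact: funrpos_Linfp|exact: funrneg_Linfp|].
  by apply: aeW => w; have := funrposBneg_pt X w; lra.
- exact: gap_family_Linf.
- exact: (lincomb_closedB LA_lin (m_range (funrpos_Linfp hX)).1
    (M_range (funrneg_Linfp hX)).1).
- by move=> f; exact: gap_family_lb.
Qed.

Lemma gap_inf_Linf X : LB X -> LA (gap_inf X).
Proof. by case/gap_infP. Qed.

Lemma gap_inf_ae_eq X X' : {ae P, forall w, X w = X' w} -> gap_inf X = gap_inf X'.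
Proof.
move=> XX'; rewrite /gap_inf; congr essinf; apply/funext => f; apply/propext.
by split => -[Y [Z [hY hZ ZXY ->]]]; exists Y, Z; split => //;
  apply: (aeS2 ZXY XX') => w; [move=> + <-|move=> + ->].
Qed.

Lemma gap_inf_le X Y Z : LB X -> LBp Y -> LBp Z ->
  {ae P, forall w, Z w + X w <= Y w} -> {ae P, forall w, gap_inf X w <= M Y w - m Z w}.
Proof. by move=> hX hY hZ ZXY; case: (gap_infP hX) => _ + _; apply; exists Y, Z. Qed.

Lemma x_le_gap_inf X : L X -> {ae P, forall w, x X w <= gap_inf X w}.
Proof.
move=> hX; case: (gap_infP (L_sub hX)) => _ _; apply => _ [Y [Z [hY hZ ZXY ->]]].
by apply: (aeS (x_dom hX hY hZ ZXY)) => w; lra.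
Qed.

Lemma gap_inf_subadd X1 X2 : LB X1 -> LB X2 ->
  {ae P, forall w, gap_inf (fun u => X1 u + X2 u) w <= gap_inf X1 w + gap_inf X2 w}.
Proof.
move=> h1 h2; pose p12 := gap_inf (fun u => X1 u + X2 u).
have le_gaps f1 f2 : gap_family X1 f1 -> gap_family X2 f2 ->
    {ae P, forall w, p12 w <= f1 w + f2 w}.
  move=> [Y1 [Z1 [hY1 hZ1 e1 ->]]] [Y2 [Z2 [hY2 hZ2 e2 ->]]].
  have := gap_inf_le (lincomb_closedD LB_lin h1 h2) (Linfp_add subB hY1 hY2)
    (Linfp_add subB hZ1 hZ2) ltac:(by apply: (aeS2 e1 e2) => w; lra).
  by move=> le12; apply: (aeS3 le12 (M_subadd hY1 hY2) (m_superadd hZ1 hZ2)) => w;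
    rewrite /p12; lra.
have le_gap2 f2 : gap_family X2 f2 -> {ae P, forall w, p12 w - f2 w <= gap_inf X1 w}.
  move=> F2; case: (gap_infP h1) => _ _; apply => f1 F1.
  by apply: (aeS (le_gaps _ _ F1 F2)) => w; lra.
have : {ae P, forall w, p12 w - gap_inf X1 w <= gap_inf X2 w}.
  case: (gap_infP h2) => _ _; apply => f2 F2.
  by apply: (aeS (le_gap2 _ F2)) => w; lra.
by apply: filterS => w; rewrite /p12; lra.
Qed.

Lemma gap_inf_scale_le (l : R) X : 0 < l -> LB X ->
  {ae P, forall w, gap_inf (fun u => l * X u) w <= l * gap_inf X w}.
Proof.
move=> l0 hX; have hlX := lincomb_closedZ LB_lin l hX.
suff : {ae P, forall w, l^-1 * gap_inf (fun u => l * X u) w <= gap_inf X w}.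
  by apply: filterS => w; rewrite ler_pdivrMl.
case: (gap_infP hX) => _ _; apply => _ [Y [Z [hY hZ ZXY ->]]].
have hlY := Linfp_scale subB (ltW l0) hY; have hlZ := Linfp_scale subB (ltW l0) hZ.
have lZXY : {ae P, forall w, l * Z w + l * X w <= l * Y w}.
  by apply: (aeS ZXY) => w ZXYw; rewrite -mulrDr ler_wpM2l // ltW.
apply: (aeS3 (gap_inf_le hlX hlY hlZ lZXY) (M_hom (ltW l0) hY) (m_hom (ltW l0) hZ)).
by move=> w + eY eZ; rewrite eY eZ -mulrBr ler_pdivrMl.
Qed.

Lemma gap_inf_hom (l : R) X : 0 < l -> LB X ->
  {ae P, forall w, gap_inf (fun u => l * X u) w = l * gap_inf X w}.
Proof.
move=> l0 hX; have il0 : 0 < l^-1 by rewrite invr_gt0.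
have := gap_inf_scale_le il0 (lincomb_closedZ LB_lin l hX).
have -> : (fun u => l^-1 * (l * X u)) = X by apply/funext => u; rewrite mulKf // gt_eqF.
move=> le2; apply: (aeS2 (gap_inf_scale_le l0 hX) le2) => w le1.
by rewrite ler_pdivlMl // => le2w; apply/eqP; rewrite eq_le le1.
Qed.

Record dominated_ext (V : (T -> R) -> Prop) (y : (T -> R) -> T -> R) : Prop := {
  dext_L : forall X, L X -> V X;
  dext_LB : forall X, V X -> LB X;
  dext_lincomb : lincomb_closed V;
  dext_ae : forall X X', V X -> {ae P, forall w, X w = X' w} -> V X';
  dext_LA : forall X, V X -> LA (y X);
  dext_wd : forall X X', V X -> V X' ->
    {ae P, forall w, X w = X' w} -> {ae P, forall w, y X w = y X' w};
  dext_linear : ae_linear_on P V y;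
  dext_x : forall X, L X -> {ae P, forall w, y X w = x X w};
  dext_le : forall X, V X -> {ae P, forall w, y X w <= gap_inf X w} }.

Lemma dominated_ext_x : dominated_ext L x.
Proof. by split => //; [move=> X _; exact: aeW|exact: x_le_gap_inf]. Qed.

Section one_step_extension.
Variables (V : (T -> R) -> Prop) (y : (T -> R) -> T -> R).
Hypothesis hy : dominated_ext V y.
Variable X0 : T -> R.
Hypotheses (hX0 : LB X0) (nX0 : ~ V X0).

Let V_lin := dext_lincomb hy.
Let V0 : V zero := dext_L hy L0.

(* Domination forces the value h0 at X0 to satisfy
   y v - gap_inf (v - X0) <= h0 <= y v + gap_inf (X0 - v) for all v in V;
   subadditivity of gap_inf makes the lower bounds lie below the upper ones. *)
Let upper_family f :=
  exists2 v, V v & f = (fun w => y v w + gap_inf (fun u => X0 u - v u) w).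
Let h0 := essinf P A upper_family.

Lemma upper_family_lb f : upper_family f ->
  {ae P, forall w, - gap_inf (fun u => - X0 u) w <= f w}.
Proof.
move=> [v hv ->]; have hvN := lincomb_closedN V_lin hv.
have := gap_inf_subadd (lincomb_closedN LB_lin hX0)
  (lincomb_closedB LB_lin hX0 (dext_LB hy hv)).
have -> : (fun u => - X0 u + (X0 u - v u)) = (fun u => - v u).
  by apply/funext => u; rewrite addrA addNr add0r.
move=> sub; apply: (aeS3 (ae_linear_onN (dext_linear hy) hv) (dext_le hy hvN) sub).
by move=> w; lra.
Qed.

Lemma h0P : is_essinf P A upper_family h0.
Proof.
apply: (essinf_spec subA (f0 := fun w => y zero w + gap_inf (fun u => X0 u - 0) w)).
- by exists zero.
- move=> _ [v hv ->]; apply: (lincomb_closedD LA_lin (dext_LA hy hv)).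
  exact: (gap_inf_Linf (lincomb_closedB LB_lin hX0 (dext_LB hy hv))).
- exact: (lincomb_closedN LA_lin (gap_inf_Linf (lincomb_closedN LB_lin hX0))).
- exact: upper_family_lb.
Qed.

Lemma h0_le v : V v ->
  {ae P, forall w, h0 w <= y v w + gap_inf (fun u => X0 u - v u) w}.
Proof. by move=> hv; case: h0P => _ + _; apply; exists v. Qed.

Lemma h0_ge v : V v ->
  {ae P, forall w, y v w - gap_inf (fun u => v u - X0 u) w <= h0 w}.
Proof.
move=> hv; case: h0P => _ _; apply => _ [v' hv' ->].
have := gap_inf_subadd (lincomb_closedB LB_lin (dext_LB hy hv) hX0)
  (lincomb_closedB LB_lin hX0 (dext_LB hy hv')).
have -> : (fun u => v u - X0 u + (X0 u - v' u)) = (fun u => v u - v' u).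
  by apply/funext => u; rewrite addrA subrK.
move=> sub; have := dext_le hy (lincomb_closedB V_lin hv hv').
move=> le; apply: (aeS3 (ae_linear_onB (dext_linear hy) hv hv') le sub).
by move=> w; lra.
Qed.

Lemma h0_dominated v t : V v ->
  {ae P, forall w, y v w + t * h0 w <= gap_inf (fun u => v u + t * X0 u) w}.
Proof.
move=> hv; have hvt := lincomb_closedD LB_lin (dext_LB hy hv)
  (lincomb_closedZ LB_lin t hX0).
have [t0|t0|<-] := ltrgtP 0 t.
- have := h0_le (lincomb_closedZ V_lin (- t^-1) hv).
  have -> : (fun u => X0 u - - t^-1 * v u) = (fun u => t^-1 * (v u + t * X0 u)).
    by apply/funext => u; field; exact: lt0r_neq0.
  have it_gt0 : 0 < t^-1 by rewrite invr_gt0.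
  move=> le; have hom := gap_inf_hom it_gt0 hvt.
  apply: (aeS3 le hom (ae_linear_onZ (dext_linear hy) (- t^-1) hv)) => w + e1 e2.
  by rewrite e1 e2 => ?; apply: addr_pmul_le t0 _; rewrite mulrBr; lra.
- have := h0_ge (lincomb_closedZ V_lin (- t)^-1 hv).
  have -> : (fun u => (- t)^-1 * v u - X0 u) = (fun u => (- t)^-1 * (v u + t * X0 u)).
    by apply/funext => u; field; exact: ltr0_neq0.
  have mt_gt0 : 0 < (- t)^-1 by rewrite invr_gt0 oppr_gt0.
  move=> ge; have hom := gap_inf_hom mt_gt0 hvt.
  apply: (aeS3 ge hom (ae_linear_onZ (dext_linear hy) (- t)^-1 hv)) => w + e1 e2.
  by rewrite e1 e2 => ?; apply: addr_nmul_le t0 _; rewrite mulrBr.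
- have -> : (fun u => v u + 0 * X0 u) = v by apply/funext => u; rewrite mul0r addr0.
  by apply: (aeS (dext_le hy hv)) => w; rewrite mul0r addr0.
Qed.

Lemma decomposition_unique v1 v2 t1 t2 : V v1 -> V v2 ->
  {ae P, forall w, v1 w + t1 * X0 w = v2 w + t2 * X0 w} ->
  t1 = t2 /\ {ae P, forall w, v1 w = v2 w}.
Proof.
move=> h1 h2 e.
have t12 : t1 = t2.
  apply/eqP/negPn/negP => t12; apply: nX0.
  have hv21 := lincomb_closedB V_lin h2 h1.
  apply: (dext_ae hy (lincomb_closedZ V_lin (t1 - t2)^-1 hv21)).
  apply: (aeS e) => w ew.
  have -> : v2 w - v1 w = (t1 - t2) * X0 w by rewrite mulrBl; lra.
  by rewrite mulKf // subr_eq0.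
by split => //; apply: (aeS e) => w; rewrite t12; exact: addIr.
Qed.

Let ext_dom X := exists v t, V v /\ {ae P, forall w, X w = v w + t * X0 w}.

Let ext_map X : T -> R :=
  if pselect (exists vt : (T -> R) * R,
      V vt.1 /\ {ae P, forall w, X w = vt.1 w + vt.2 * X0 w}) is left e
  then let vt := proj1_sig (cid e) in fun w => y vt.1 w + vt.2 * h0 w
  else zero.

Lemma ext_mapE X v t : V v -> {ae P, forall w, X w = v w + t * X0 w} ->
  {ae P, forall w, ext_map X w = y v w + t * h0 w}.
Proof.
move=> hv e; rewrite /ext_map; case: pselect => [ex|]; last by case; exists (v, t).
case: (cid ex) => -[v' t'] /= [hv' e'].
have e'' : {ae P, forall w, v' w + t' * X0 w = v w + t * X0 w}.
  by apply: (aeS2 e e') => w <- <-.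
have [<- vv'] := decomposition_unique hv' hv e''.
by apply: (aeS (dext_wd hy hv' hv vv')) => w ->.
Qed.

Lemma ext_dom_lincomb : lincomb_closed ext_dom.
Proof.
move=> a b X Y [v1 [t1 [hv1 e1]]] [v2 [t2 [hv2 e2]]].
exists (fun w => a * v1 w + b * v2 w), (a * t1 + b * t2); split; first exact: V_lin.
by apply: (aeS2 e1 e2) => w -> ->; ring.
Qed.

Lemma ext_map_linear : ae_linear_on P ext_dom ext_map.
Proof.
move=> a b X Y [v1 [t1 [hv1 e1]]] [v2 [t2 [hv2 e2]]].
have e : {ae P, forall w, a * X w + b * Y w =
    (a * v1 w + b * v2 w) + (a * t1 + b * t2) * X0 w}.
  by apply: (aeS2 e1 e2) => w -> ->; ring.
apply: (aeS4 (ext_mapE (V_lin a b hv1 hv2) e) (ext_mapE hv1 e1) (ext_mapE hv2 e2)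
  (dext_linear hy a b hv1 hv2)).
by move=> w -> -> -> ->; ring.
Qed.

Lemma ext_map_V X : V X -> {ae P, forall w, ext_map X w = y X w}.
Proof.
move=> hX; have e : {ae P, forall w, X w = X w + 0 * X0 w}.
  by apply: aeW => w; rewrite mul0r addr0.
by apply: (aeS (ext_mapE hX e)) => w ->; rewrite mul0r addr0.
Qed.

Lemma ext_dominated : dominated_ext ext_dom ext_map.
Proof.
have [h0_LA _ _] := h0P.
have V_ext X : V X -> ext_dom X.
  by exists X, 0; split => //; apply: aeW => w; rewrite mul0r addr0.
split.
- by move=> X /(dext_L hy) /V_ext.
- move=> X [v [t [hv e]]].
  apply: (Linf_ae_eq (lincomb_closedD LB_lin (dext_LB hy hv)
    (lincomb_closedZ LB_lin t hX0))).
  by apply: (aeS e) => w ->.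
- exact: ext_dom_lincomb.
- move=> X X' [v [t [hv e]]] e'; exists v, t; split => //.
  by apply: (aeS2 e e') => w <- ->.
- move=> X [v [t [hv e]]].
  apply: (Linf_ae_eq (lincomb_closedD LA_lin (dext_LA hy hv)
    (lincomb_closedZ LA_lin t h0_LA))).
  by apply: (aeS (ext_mapE hv e)) => w ->.
- move=> X X' [v [t [hv e]]] _ e'.
  have e2 : {ae P, forall w, X' w = v w + t * X0 w} by apply: (aeS2 e e') => w <- <-.
  by apply: (aeS2 (ext_mapE hv e) (ext_mapE hv e2)) => w -> ->.
- exact: ext_map_linear.
- by move=> X hX; apply: (aeS2 (ext_map_V (dext_L hy hX)) (dext_x hy hX)) => w -> ->.
- move=> X [v [t [hv e]]]; rewrite (gap_inf_ae_eq e).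
  by apply: (aeS2 (ext_mapE hv e) (h0_dominated t hv)) => w ->.
Qed.

Lemma dominated_ext_step : exists V' y', [/\ dominated_ext V' y', V' X0,
  forall X, V X -> V' X & forall X, V X -> {ae P, forall w, y X w = y' X w}].
Proof.
exists ext_dom, ext_map; split; first exact: ext_dominated.
- by exists zero, 1; split => //; apply: aeW => w; rewrite mul1r add0r.
- by move=> X hX; exists X, 0; split => //; apply: aeW => w; rewrite mul0r addr0.
- by move=> X hX; apply: (aeS (ext_map_V hX)) => w ->.
Qed.

End one_step_extension.

Record extension := Extension {
  ext_domain : (T -> R) -> Prop;
  ext_fun : (T -> R) -> T -> R;
  ext_spec : dominated_ext ext_domain ext_fun }.

Definition ext_le (s t : extension) : bool :=
  `[< (forall X, ext_domain s X -> ext_domain t X) /\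
      (forall X, ext_domain s X -> {ae P, forall w, ext_fun s X w = ext_fun t X w}) >].

Lemma ext_leP s t : ext_le s t <-> (forall X, ext_domain s X -> ext_domain t X) /\
  (forall X, ext_domain s X -> {ae P, forall w, ext_fun s X w = ext_fun t X w}).
Proof. by split => /asboolP. Qed.

Lemma ext_le_refl s : ext_le s s.
Proof. by apply/ext_leP; split => // X _; exact: aeW. Qed.

Lemma ext_le_trans r s t : ext_le r s -> ext_le s t -> ext_le r t.
Proof.
move=> /ext_leP[rs_dom rs_fun] /ext_leP[st_dom st_fun]; apply/ext_leP.
split => X hX; first exact/st_dom/rs_dom.
by apply: (aeS2 (rs_fun _ hX) (st_fun _ (rs_dom _ hX))) => w -> ->.
Qed.

Section chain_union.
Variable Ch : set extension.
Hypotheses (Ch_total : total_on Ch ext_le).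
Variable e0 : extension.
Hypothesis Ch_e0 : Ch e0.

Let union_dom X := exists e, Ch e /\ ext_domain e X.

Let union_fun X : T -> R :=
  if pselect (exists e, Ch e /\ ext_domain e X) is left ex
  then ext_fun (proj1_sig (cid ex)) X else zero.

Lemma union_funE e X : Ch e -> ext_domain e X ->
  {ae P, forall w, union_fun X w = ext_fun e X w}.
Proof.
move=> Ce hX; rewrite /union_fun; case: pselect => [ex|]; last by case; exists e.
case: (cid ex) => e' /= [Ce' hX'].
case: (Ch_total Ce' Ce) => /ext_leP[_ fun_le]; first exact: fun_le.
by apply: (aeS (fun_le _ hX)) => w ->.
Qed.

Lemma union_dom2 X Y : union_dom X -> union_dom Y ->
  exists e, [/\ Ch e, ext_domain e X & ext_domain e Y].
Proof.
move=> [e1 [C1 hX]] [e2 [C2 hY]].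
case: (Ch_total C1 C2) => /ext_leP[le _]; first by exists e2; split => //; exact: le.
by exists e1; split => //; exact: le.
Qed.

Lemma union_dominated : dominated_ext union_dom union_fun.
Proof.
split.
- by move=> X hX; exists e0; split => //; exact: (dext_L (ext_spec e0) hX).
- by move=> X [e [_ hX]]; exact: (dext_LB (ext_spec e) hX).
- move=> a b X Y hX hY; have [e [Ce heX heY]] := union_dom2 hX hY.
  by exists e; split => //; exact: (dext_lincomb (ext_spec e) a b heX heY).
- move=> X X' [e [Ce hX]] XX'.
  by exists e; split => //; exact: (dext_ae (ext_spec e) hX XX').
- move=> X [e [Ce hX]]; apply: (Linf_ae_eq (dext_LA (ext_spec e) hX)).
  by apply: (aeS (union_funE Ce hX)) => w ->.
- move=> X X' hX hX' XX'; have [e [Ce heX heX']] := union_dom2 hX hX'.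
  apply: (aeS3 (union_funE Ce heX) (union_funE Ce heX')
    (dext_wd (ext_spec e) heX heX' XX')).
  by move=> w -> ->.
- move=> a b X Y hX hY; have [e [Ce heX heY]] := union_dom2 hX hY.
  have heXY := dext_lincomb (ext_spec e) a b heX heY.
  apply: (aeS4 (union_funE Ce heXY) (union_funE Ce heX) (union_funE Ce heY)
    (dext_linear (ext_spec e) a b heX heY)).
  by move=> w -> -> ->.
- move=> X hX; have he0X := dext_L (ext_spec e0) hX.
  by apply: (aeS2 (union_funE Ch_e0 he0X) (dext_x (ext_spec e0) hX)) => w -> ->.
- move=> X [e [Ce hX]].
  by apply: (aeS2 (union_funE Ce hX) (dext_le (ext_spec e) hX)) => w ->.
Qed.

Lemma union_ub e : Ch e -> ext_le e (Extension union_dominated).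
Proof.
move=> Ce; apply/ext_leP; split => /= X hX; first by exists e.
by apply: (aeS (union_funE Ce hX)) => w ->.
Qed.

End chain_union.

Lemma chain_has_ub (Ch : set extension) : total_on Ch ext_le ->
  exists t, forall s, Ch s -> ext_le s t.
Proof.
move=> Ch_total; have [[e0 Ch_e0]|Ch0] := pselect (exists e, Ch e).
  by exists (Extension (union_dominated Ch_total Ch_e0)) => s; exact: union_ub.
by exists (Extension dominated_ext_x) => s Cs; case: Ch0; exists s.
Qed.

Lemma exists_total_extension :
  exists V y, dominated_ext V y /\ forall X, LB X -> V X.
Proof.
have [t t_max] := ZL_preorder (Extension dominated_ext_x) ext_le_refl ext_le_trans
  chain_has_ub.
exists (ext_domain t), (ext_fun t); split => [|X0 hX0]; first exact: ext_spec.
apply/not_notP => nX0.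
have [V' [y' [hy' V'X0 sub_dom sub_fun]]] := dominated_ext_step (ext_spec t) hX0 nX0.
have /t_max/ext_leP[le_dom _] : ext_le t (Extension hy') by apply/ext_leP.
exact/nX0/le_dom.
Qed.

Section total_extension.
Variables (V : (T -> R) -> Prop) (y : (T -> R) -> T -> R).
Hypotheses (hy : dominated_ext V y) (V_LB : forall X, LB X -> V X).

Lemma total_ext_dominated X Y Z : LB X -> LBp Y -> LBp Z ->
  {ae P, forall w, Z w + X w <= Y w} -> {ae P, forall w, m Z w + y X w <= M Y w}.
Proof.
move=> hX hY hZ ZXY.
by apply: (aeS2 (dext_le hy (V_LB hX)) (gap_inf_le hX hY hZ ZXY)) => w; lra.
Qed.

Lemma total_ext_monotone X X' : LB X -> LB X' ->
  {ae P, forall w, X' w <= X w} -> {ae P, forall w, y X' w <= y X w}.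
Proof.
move=> hX hX' X'X; have hD := lincomb_closedB LB_lin hX' hX.
have := total_ext_dominated hD LBp0 LBp0 ltac:(by apply: (aeS X'X) => w; lra).
move=> le; apply: (aeS4 le M0 m0 (ae_linear_onB (dext_linear hy) (V_LB hX') (V_LB hX))).
by move=> w; lra.
Qed.

Lemma total_ext_bounds X : LBp X -> {ae P, forall w, m X w <= y X w <= M X w}.
Proof.
move=> hX; have hXB := hX.1; have hN := lincomb_closedN LB_lin hXB.
have up := total_ext_dominated hXB hX LBp0 ltac:(by apply: aeW => w; rewrite add0r).
have lo := total_ext_dominated hN LBp0 hX ltac:(by apply: aeW => w; rewrite addrN).
apply: (aeS5 up lo (ae_linear_onN (dext_linear hy) (V_LB hXB)) M0 m0) => w.
by move=> *; apply/andP; split; lra.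
Qed.

Lemma total_ext_cvg_from_above (Xn : nat -> T -> R) X :
  (forall n, LB (Xn n)) -> LB X ->
  {ae P, forall w, forall n, Xn n.+1 w <= Xn n w} ->
  {ae P, forall w, (fun n => Xn n w) @ \oo --> X w} ->
  {ae P, forall w, (fun n => y (Xn n) w) @ \oo --> y X w}.
Proof.
move=> hXn hX dec cvg; pose D n u := Xn n u - X u.
have hD n : LBp (D n).
  split; first exact: (lincomb_closedB LB_lin (hXn n) hX).
  apply: (aeS2 dec cvg) => w dec_w cvg_w.
  have ni : nonincreasing_seq (fun n => Xn n w) by apply/nonincreasing_seqP.
  have := nonincreasing_cvgn_ge ni (cvgP _ cvg_w) n.
  by rewrite (cvg_lim _ cvg_w) // /D subr_ge0.
have M_D0 := M_regular hD ltac:(by apply: (aeS dec) => w + n; rewrite /D lerD2r)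
  ltac:(by apply: (aeS cvg) => w ?; apply/subr_cvg0).
have bounds : {ae P, forall w, forall n, 0 <= y (Xn n) w - y X w <= M (D n) w}.
  apply: ae_foralln => n.
  have X_le : {ae P, forall w, X w <= Xn n w}.
    by apply: (aeS (hD n).2) => w; rewrite /D subr_ge0.
  have lo := total_ext_monotone (hXn n) hX X_le.
  have DD : {ae P, forall w, 0 + D n w <= D n w} by apply: aeW => w; rewrite add0r.
  have up := total_ext_dominated (hD n).1 (hD n) LBp0 DD.
  apply: (aeS4 lo up (ae_linear_onB (dext_linear hy) (V_LB (hXn n)) (V_LB hX)) m0) => w.
  by rewrite /D => *; apply/andP; split; lra.
apply: (aeS2 bounds M_D0) => w bnd M_D0w; apply/subr_cvg0.
apply: (squeeze_cvgr (f := fun=> 0) (h := fun n => M (D n) w)); last exact: M_D0w.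
- by apply: nearW => n; exact: bnd.
- exact: cvg_cst.
Qed.

End total_extension.

Lemma conditional_extension : exists x' : (T -> R) -> (T -> R),
  (forall X, LB X -> LA (x' X)) /\
  (forall X X', LB X -> LB X' ->
     {ae P, forall w, X w = X' w} -> {ae P, forall w, x' X w = x' X' w}) /\
  (forall (a b : R) X Y, LB X -> LB Y ->
     {ae P, forall w, x' (fun u => a * X u + b * Y u) w = a * x' X w + b * x' Y w}) /\
  (forall X, L X -> {ae P, forall w, x' X w = x X w}) /\
  (forall X X', LB X -> LB X' ->
     {ae P, forall w, X' w <= X w} -> {ae P, forall w, x' X' w <= x' X w}) /\
  (forall (Xn : nat -> T -> R) X, (forall n, LB (Xn n)) -> LB X ->
     {ae P, forall w, forall n, Xn n.+1 w <= Xn n w} ->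
     {ae P, forall w, (fun n => Xn n w) @ \oo --> X w} ->
     {ae P, forall w, forall n, x' (Xn n.+1) w <= x' (Xn n) w} /\
     {ae P, forall w, (fun n => x' (Xn n) w) @ \oo --> x' X w}) /\
  (forall X Y Z, LB X -> LBp Y -> LBp Z ->
     {ae P, forall w, Z w + X w <= Y w} ->
     {ae P, forall w, m Z w + x' X w <= M Y w}) /\
  (forall X, LBp X -> {ae P, forall w, m X w <= x' X w <= M X w}).
Proof.
have [V [y [hy V_LB]]] := exists_total_extension.
exists y; split; [|split; [|split; [|split; [|split; [|split; [|split]]]]]].
- by move=> X /V_LB; exact: (dext_LA hy).
- by move=> X X' /V_LB hX /V_LB; exact: (dext_wd hy).
- by move=> a b X Y /V_LB hX /V_LB; exact: (dext_linear hy).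
- exact: (dext_x hy).
- exact: (total_ext_monotone hy V_LB).
- move=> Xn X hXn hX dec cvg; split; last exact: (total_ext_cvg_from_above hy V_LB).
  apply: ae_foralln => n; apply: (total_ext_monotone hy V_LB) => //.
  by apply: (aeS dec) => w; apply.
- exact: (total_ext_dominated hy V_LB).
- exact: (total_ext_bounds hy V_LB).
Qed.

End conditional_extension.

Theorem theorem3p11 (d : measure_display) (T : measurableType d) (R : realType)
  (P : probability T R)
  (Pcomplete : measure_is_complete P)
  (A B : set (set T))
  (subA : pl_sub_sigma_algebra A) (subB : pl_sub_sigma_algebra B)
  (AB : A `<=` B)
  (Bgen : exists E : nat -> set T, B = <<s range E `|` pl_null_events P >>)
  (L : (T -> R) -> Prop)
  (L_sub : forall X, L X -> pl_Linf P B X)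
  (L_ae : forall X X', L X -> {ae P, forall w, X w = X' w} -> L X')
  (L0 : L (fun _ => 0))
  (L_lin : forall (a b : R) X Y, L X -> L Y -> L (fun w => a * X w + b * Y w))
  (M m : (T -> R) -> (T -> R))
  (M_wd : forall X X', pl_Linfp P B X -> pl_Linfp P B X' ->
     {ae P, forall w, X w = X' w} -> {ae P, forall w, M X w = M X' w})
  (M_range : forall X, pl_Linfp P B X -> pl_Linfp P A (M X))
  (M_subadd : forall X Y, pl_Linfp P B X -> pl_Linfp P B Y ->
     {ae P, forall w, M (fun u => X u + Y u) w <= M X w + M Y w})
  (M_hom : forall (l : R) X, 0 <= l -> pl_Linfp P B X ->
     {ae P, forall w, M (fun u => l * X u) w = l * M X w})
  (M_regular : forall Xn : nat -> T -> R, (forall n, pl_Linfp P B (Xn n)) ->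
     {ae P, forall w, forall n, Xn n.+1 w <= Xn n w} ->
     {ae P, forall w, (fun n => Xn n w) @ \oo --> (0:R)} ->
     {ae P, forall w, (fun n => M (Xn n) w) @ \oo --> (0:R)})
  (m_wd : forall X X', pl_Linfp P B X -> pl_Linfp P B X' ->
     {ae P, forall w, X w = X' w} -> {ae P, forall w, m X w = m X' w})
  (m_range : forall X, pl_Linfp P B X -> pl_Linfp P A (m X))
  (m_superadd : forall X Y, pl_Linfp P B X -> pl_Linfp P B Y ->
     {ae P, forall w, m X w + m Y w <= m (fun u => X u + Y u) w})
  (m_hom : forall (l : R) X, 0 <= l -> pl_Linfp P B X ->
     {ae P, forall w, m (fun u => l * X u) w = l * m X w})
  (x : (T -> R) -> (T -> R))
  (x_wd : forall X X', L X -> L X' ->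
     {ae P, forall w, X w = X' w} -> {ae P, forall w, x X w = x X' w})
  (x_range : forall X, L X -> pl_Linf P A (x X))
  (x_lin : forall (a b : R) X Y, L X -> L Y ->
     {ae P, forall w, x (fun u => a * X u + b * Y u) w = a * x X w + b * x Y w})
  (x_dom : forall X Y Z, L X -> pl_Linfp P B Y -> pl_Linfp P B Z ->
     {ae P, forall w, Z w + X w <= Y w} ->
     {ae P, forall w, m Z w + x X w <= M Y w}) :
  exists x' : (T -> R) -> (T -> R),
    (forall X, pl_Linf P B X -> pl_Linf P A (x' X)) /\
        (forall X X', pl_Linf P B X -> pl_Linf P B X' ->
           {ae P, forall w, X w = X' w} -> {ae P, forall w, x' X w = x' X' w}) /\
        (forall (a b : R) X Y, pl_Linf P B X -> pl_Linf P B Y ->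
           {ae P, forall w, x' (fun u => a * X u + b * Y u) w
                            = a * x' X w + b * x' Y w}) /\
        (forall X, L X -> {ae P, forall w, x' X w = x X w}) /\
        (forall X X', pl_Linf P B X -> pl_Linf P B X' ->
           {ae P, forall w, X' w <= X w} -> {ae P, forall w, x' X' w <= x' X w}) /\
        (forall (Xn : nat -> T -> R) X, (forall n, pl_Linf P B (Xn n)) -> pl_Linf P B X ->
           {ae P, forall w, forall n, Xn n.+1 w <= Xn n w} ->
           {ae P, forall w, (fun n => Xn n w) @ \oo --> X w} ->
           {ae P, forall w, forall n, x' (Xn n.+1) w <= x' (Xn n) w} /\
           {ae P, forall w, (fun n => x' (Xn n) w) @ \oo --> x' X w}) /\
        (forall X Y Z, pl_Linf P B X -> pl_Linfp P B Y -> pl_Linfp P B Z ->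
           {ae P, forall w, Z w + X w <= Y w} ->
           {ae P, forall w, m Z w + x' X w <= M Y w})
      /\ (forall X, pl_Linfp P B X ->
           {ae P, forall w, m X w <= x' X w <= M X w}).
Proof.
exact: (conditional_extension subA subB L_sub L_ae L0 L_lin M_range M_subadd M_hom
  M_regular m_range m_superadd m_hom x_wd x_range x_lin x_dom).
Qed.
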